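(* Let $d \ge 3$ and $s\ge 2$, $t$ be integers with either ($s = 2$ and $t \geq 6$) or ($s \geq 3$ and $t \geq 7$). Then every subgraph of $W_d(s)$ isomorphic to $F_t$ contains exactly one hub vertex of $W_d(s)$.
   Context: For $d \ge 3$ and $s \ge 1$, the $s$-hubbed wheel $W_d(s) = \overline{K_s} + C_d$ has vertex set $\{u_1,\dots,u_s\} \cup \{v_1,\dots,v_d\}$ (hub vertices $u_a$ and boundary vertices $v_i$), where $v_1v_2\cdots v_dv_1$ is a cycle, the hub vertices are pairwise non-adjacent, and every $u_a$ is adjacent to every $v_i$. The fan $F_t$ ($t\ge 3$) is the graph obtained from a cycle $v_1v_2\cdots v_tv_1$ by adding all chords $v_1v_i$, $3 \le i \le t-1$. *)

From mathcomp Require Import all_boot.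
Set Implicit Arguments. Unset Strict Implicit. Unset Printing Implicit Defensive.

(* Adjacency of the cycle 0 - 1 - ... - (n-1) - 0 on 'I_n (vertex v_{i+1} is i). *)
Definition cyc_adj (n : nat) : rel 'I_n :=
  fun i j => (val j == (val i).+1 %% n) || (val i == (val j).+1 %% n).

Definition wheel_adj (s d : nat) : rel ('I_s + 'I_d) :=
  fun x y => match x, y with
  | inl _, inr _ => true
  | inr _, inl _ => true
  | inr i, inr j => cyc_adj i j
  | inl _, inl _ => false
  end.

Definition is_hub (s d : nat) (x : 'I_s + 'I_d) : bool :=
  if x is inl _ then true else false.

(* The fan F_t on 'I_t: cycle v_1 ... v_t v_1 plus chords v_1 v_i, 3 <= i <= t-1
   (vertex v_k is represented by k-1). *)
Definition fan_adj (t : nat) : rel 'I_t :=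
  fun x y => [|| cyc_adj x y,
                 (val x == 0) && (2 <= val y <= t - 2)
               | (val y == 0) && (2 <= val x <= t - 2)].

(* f realises a subgraph of W_d(s) isomorphic to F_t: f is an injective map of
   the vertices of F_t sending edges of F_t to edges of W_d(s). The subgraph is
   (image of f, image of the edges). *)
Definition fan_copy (s d t : nat) (f : 'I_t -> 'I_s + 'I_d) : Prop :=
  injective f /\ forall x y : 'I_t, fan_adj x y -> wheel_adj (f x) (f y).

(* If the apex v_1 of the fan is sent to a hub, all its neighbours, i.e. all
   other vertices, are boundary vertices, since the hubs are independent.  If
   the apex is sent to a boundary vertex v, the rest of the fan lies in the
   neighbourhood of v, which consists of the s hubs and two boundary vertices;
   so t - 1 <= s + 2, excluding s = 2, t >= 6.  Moreover every triangle through
   v contains a boundary neighbour of v, and the fan has three disjoint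
   triangles v_1 v_2 v_3, v_1 v_4 v_5, v_1 v_6 v_7 as soon as t >= 7, one too
   many for the two boundary neighbours of v. *)

From mathcomp Require Import all_boot zify.

Set Implicit Arguments.
Unset Strict Implicit.
Unset Printing Implicit Defensive.

Lemma cyc_adjE n (i j : 'I_n) : cyc_adj i j = (j == ordS i) || (j == ord_pred i).
Proof.
rewrite /cyc_adj.
change (val j == (val i).+1 %% n) with (j == ordS i).
change (val i == (val j).+1 %% n) with (i == ordS j).
by rewrite [i == _]eq_sym (can2_eq (@ordSK n) (@ord_predK n)).
Qed.

Lemma card_cyc_nbrs n (i : 'I_n) : #|[set j | cyc_adj i j]| <= 2.
Proof.
apply: leq_trans (_ : #|[set ordS i; ord_pred i]| <= 2); last by rewrite cards2 ltnS leq_b1.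
by apply/subset_leq_card/subsetP => j; rewrite !inE cyc_adjE.
Qed.

Lemma cyc_nbrs_pigeonhole n (i j1 j2 j3 : 'I_n) :
  cyc_adj i j1 -> cyc_adj i j2 -> cyc_adj i j3 -> [|| j1 == j2, j1 == j3 | j2 == j3].
Proof.
by rewrite !cyc_adjE => /orP[]/eqP-> /orP[]/eqP-> /orP[]/eqP->; rewrite !eqxx ?orbT.
Qed.

Section Wheel.
Variables s d : nat.
Implicit Types x y : 'I_s + 'I_d.

Lemma wheel_adj_hub x y : wheel_adj x y -> is_hub x -> ~~ is_hub y.
Proof. by case: x; case: y. Qed.

Lemma card_wheel_nbrs (i : 'I_d) : #|[set x : 'I_s + 'I_d | wheel_adj (inr i) x]| <= s + 2.
Proof.
have sub_nbrs : [set x | wheel_adj (inr i) x]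
    \subset @inl _ 'I_d @: [set: 'I_s] :|: @inr 'I_s _ @: [set j | cyc_adj i j].
  apply/subsetP => -[a | j] /[!inE] adj_ij; apply/orP.
    by left; rewrite imset_f.
  by right; rewrite imset_f ?inE.
apply: leq_trans (subset_leq_card sub_nbrs) _; apply: leq_trans (leq_card_setU _ _) _.
rewrite (card_imset _ inl_inj) (card_imset _ inr_inj) cardsT card_ord.
by rewrite leq_add2l card_cyc_nbrs.
Qed.

Lemma wheel_triangle (i : 'I_d) x y :
  wheel_adj (inr i) x -> wheel_adj (inr i) y -> wheel_adj x y ->
  exists2 j, cyc_adj i j & (x == inr j) || (y == inr j).
Proof.
case: x => [a | j] adj_ix; case: y => [b | k] adj_iy //= adj_xy.
- by exists k; rewrite ?eqxx ?orbT.
- by exists j; rewrite ?eqxx.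
- by exists j; rewrite ?eqxx.
Qed.

End Wheel.

Lemma fan_adj_apex t (x y : 'I_t) : val x = 0 -> 0 < val y -> fan_adj x y.
Proof.
move=> x0; case: y => k lt_kt /= k_gt0; rewrite /fan_adj /cyc_adj x0 /=.
have [_ | le_k1] := ltnP 1 k.
  have [_ | lt_tk] := leqP k (t - 2); first by rewrite orbT.
  by rewrite (_ : k.+1 = t) ?modnn ?eqxx ?orbT //; lia.
by rewrite (_ : k = 1) 1?(@modn_small 1 t) ?eqxx //; lia.
Qed.

Lemma fan_adj_succ t (x y : 'I_t) : val y = (val x).+1 -> fan_adj x y.
Proof. by move=> yE; rewrite /fan_adj /cyc_adj -yE (modn_small (ltn_ord y)) eqxx. Qed.

Section FanCopy.
Variables (s d t : nat) (f : 'I_t -> 'I_s + 'I_d) (apex : 'I_t).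
Hypotheses (f_copy : fan_copy f) (apex0 : val apex = 0).

Let f_inj : injective f := f_copy.1.
Let f_adj : forall x y, fan_adj x y -> wheel_adj (f x) (f y) := f_copy.2.

Lemma fan_copy_apex_adj (y : 'I_t) : y != apex -> wheel_adj (f apex) (f y).
Proof.
move=> y_apex; apply/f_adj/fan_adj_apex => //; rewrite lt0n.
by apply: contra y_apex => /eqP y0; apply/eqP/val_inj; rewrite /= y0 apex0.
Qed.

Lemma fan_copy_hub_apex :
  is_hub (f apex) -> [set x in codom f | is_hub x] = [set f apex].
Proof.
move=> hub_apex; apply/setP => x; rewrite !inE.
apply/andP/eqP => [[/codomP[y ->] hub_y] | ->]; last by rewrite codom_f.
have [-> // | y_apex] := eqVneq y apex.
by have := wheel_adj_hub (fan_copy_apex_adj y_apex) hub_apex; rewrite hub_y.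
Qed.

Lemma fan_copy_boundary_apex_size (i : 'I_d) : f apex = inr i -> t <= s + 3.
Proof.
move=> apexE.
have sub_nbrs : f @: [set~ apex] \subset [set x | wheel_adj (inr i) x].
  by apply/subsetP => _ /imsetP[y /[!inE] y_apex ->]; rewrite -apexE fan_copy_apex_adj.
have := leq_trans (subset_leq_card sub_nbrs) (card_wheel_nbrs s i).
by rewrite card_imset // cardsC1 card_ord; lia.
Qed.

Lemma fan_copy_triangle (i : 'I_d) k : f apex = inr i -> 0 < k -> k.+1 < t ->
  exists2 z : 'I_t, k <= z <= k.+1 & exists2 j, cyc_adj i j & f z = inr j.
Proof.
move=> apexE k_gt0 lt_k1t; pose y := Ordinal (ltnW lt_k1t); pose y' := Ordinal lt_k1t.
have := f_adj (@fan_adj_apex _ apex y apex0 k_gt0).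
have := f_adj (@fan_adj_apex _ apex y' apex0 (ltn0Sn k)).
rewrite apexE => adj_iy' adj_iy.
have [j adj_ij /orP[] /eqP fE] :=
  wheel_triangle adj_iy adj_iy' (f_adj (fan_adj_succ (erefl : val y' = y.+1))).
- by exists y; [rewrite /= leqnn leqnSn | exists j].
- by exists y'; [rewrite /= leqnn leqnSn | exists j].
Qed.

Lemma fan_copy_boundary_apex_le6 (i : 'I_d) : f apex = inr i -> t <= 6.
Proof.
move=> apexE; rewrite leqNgt; apply/negP => lt6t.
have lt2t : 2 < t by lia.
have lt4t : 4 < t by lia.
have [z1 z1E [j1 adj1 f1]] := fan_copy_triangle (k := 1) apexE isT lt2t.
have [z3 z3E [j3 adj3 f3]] := fan_copy_triangle (k := 3) apexE isT lt4t.
have [z5 z5E [j5 adj5 f5]] := fan_copy_triangle (k := 5) apexE isT lt6t.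
have same_image (z z' : 'I_t) j j' : f z = inr j -> f z' = inr j' -> j = j' -> z = z' :> nat.
  by move=> fz fz' eq_j; rewrite (f_inj (etrans fz (etrans (congr1 inr eq_j) (esym fz')))).
case/or3P: (cyc_nbrs_pigeonhole adj1 adj3 adj5) => /eqP eq_j.
- by have := same_image _ _ _ _ f1 f3 eq_j; lia.
- by have := same_image _ _ _ _ f1 f5 eq_j; lia.
- by have := same_image _ _ _ _ f3 f5 eq_j; lia.
Qed.

End FanCopy.

Theorem lemma2p4 (d s t : nat) :
  3 <= d -> 2 <= s ->
  (s = 2 /\ 6 <= t) \/ (3 <= s /\ 7 <= t) ->
  forall f : 'I_t -> 'I_s + 'I_d,
    fan_copy f ->
    #|[set x in codom f | is_hub x]| = 1.
Proof.
move=> _ _ st_cases f f_copy.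
have t_gt0 : 0 < t by case: st_cases => -[_]; lia.
pose apex := Ordinal t_gt0; have apex0 : val apex = 0 by [].
case apexE: (f apex) => [a | i].
  by rewrite (fan_copy_hub_apex f_copy apex0) ?apexE ?cards1.
have := fan_copy_boundary_apex_size f_copy apex0 apexE.
have := fan_copy_boundary_apex_le6 f_copy apex0 apexE.
by case: st_cases => -[]; lia.
Qed.
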